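(* Each of the following argument forms is not valid, i.e. in each item there exist formulas $\alpha,\beta,\delta$ for which the stated failure occurs: (1) $\alpha\nvDash\alpha\land\alpha$; (2) $\alpha\land\beta\nvDash\beta\land\alpha$; (3) $\alpha\land(\beta\land\delta)\nvDash(\alpha\land\beta)\land\delta$; (4) $(\alpha\land\beta)\land\delta\nvDash\alpha\land(\beta\land\delta)$; (5) $\alpha\land(\beta\lor\delta)\nvDash(\alpha\land\beta)\lor(\alpha\land\delta)$; (6) $(\alpha\land\beta)\lor(\alpha\land\delta)\nvDash\alpha\land(\beta\lor\delta)$; (7) it is not the case that $\delta\vDash\alpha$ and $\delta\vDash\beta$ always imply $\delta\vDash\alpha\land\beta$; (8) $\alpha\land\lnot\alpha\nvDash\beta$; (9) $\alpha\uplus\beta\nvDash\beta\uplus\alpha$; (10) $\alpha\uplus\beta\nvDash\alpha\lor\beta$, and $\alpha\uplus\beta\nvDash\lnot\alpha\lor\lnot\beta$.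
   Context: Hilbert spaces and states: for $n\ge1$, $\mathcal H^{(n)}=(\mathbb C^2)^{\otimes n}$ with canonical basis $|x_1,\dots,x_n\rangle$ ($x_i\in\{0,1\}$, $|0\rangle=(1,0)$, $|1\rangle=(0,1)$); $\mathfrak D(\mathcal H^{(n)})$ is the set of density operators (qumixes). A truth-perspective is a unitary $\mathfrak T$ on $\mathbb C^2$, $\mathfrak T^{(n)}=\mathfrak T^{\otimes n}$. $^{\mathfrak T}P_1^{(n)}$ (resp. $^{\mathfrak T}P_0^{(n)}$) is the projection onto the span of the $\mathfrak T^{(n)}|x_1,\dots,x_n\rangle$ with $x_n=1$ (resp. $0$). $\mathtt p_{\mathfrak T}(\rho)=\mathrm{tr}(^{\mathfrak T}P_1^{(n)}\rho)$, and $\rho\preceq_{\mathfrak T}\sigma$ iff $\mathtt p_{\mathfrak T}(\rho)\le\mathtt p_{\mathfrak T}(\sigma)$. $Red^{(j_1,\dots,j_s)}_{[n_1,\dots,n_t]}(\rho)$ is the reduced state of $\rho$ on factors $j_1,\dots,j_s$ of $\mathcal H^{(n_1)}\otimes\cdots\otimes\mathcal H^{(n_t)}$. Gates (canonical basis, extended linearly): $\mathtt{NOT}^{(n)}|x_1..x_n\rangle=|x_1..x_{n-1}\rangle\otimes|1-x_n\rangle$; $\sqrt{\mathtt I}^{(n)}|x_1..x_n\rangle=|x_1..x_{n-1}\rangle\otimes\frac1{\sqrt2}((-1)^{x_n}|x_n\rangle+|1-x_n\rangle)$; $\sqrt{\mathtt{NOT}}^{(n)}|x_1..x_n\rangle=|x_1..x_{n-1}\rangle\otimes(\frac{1-i}2|x_n\rangle+\frac{1+i}2|1-x_n\rangle)$;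 $\mathtt{XOR}^{(m,n)}|x_1..x_m,y_1..y_n\rangle=|x_1..x_m,y_1..y_{n-1}\rangle\otimes|x_m\oplus y_n\rangle$; $\mathtt T^{(m,n,p)}|x_1..x_m,y_1..y_n,z_1..z_p\rangle=|x_1..x_m,y_1..y_n,z_1..z_{p-1}\rangle\otimes|x_my_n\oplus z_p\rangle$ ($\oplus$ addition mod 2). For a gate $G$ on $\mathcal H^{(n)}$: $G_{\mathfrak T}=\mathfrak T^{(n)}G\mathfrak T^{(n)\dagger}$, $^{\mathfrak D}G_{\mathfrak T}(\rho)=G_{\mathfrak T}\rho G_{\mathfrak T}^\dagger$. Language: formulas built from atomic formulas (including distinguished atoms $\mathbf t,\mathbf f$) with unary $\lnot,\sqrt{id},\sqrt\lnot$, binary $\uplus$, ternary $\intercal$; $\alpha\land\beta:=\intercal(\alpha,\beta,\mathbf f)$, $\alpha\lor\beta:=\lnot(\lnot\alpha\land\lnot\beta)$. $At(\alpha)$ = number of occurrences of atomic formulas in $\alpha$. Syntactical tree: $Level_1^\alpha=(\alpha)$; $Level_{i+1}^\alpha$ is obtained from $Level_i^\alpha=(\beta_1,\dots,\beta_r)$ by replacing each non-atomic $\beta_j$ by its immediate subformulas (arguments, in order) and keeping atomic $\beta_j$; the last level $Level_h^\alpha$ lists all atomic occurrences. $\mathcal H^{(At\alpha)}=\bigotimes_j\mathcal H^{(At\beta_j)}$. The $\mathfrak T$-gate $G^\alpha_{\mathfrak T(i)}$ ($1\le i<h$) is the tensor product over $j$ of: identity of $\mathbb C^2$ if $\beta_j$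 atomic; $\mathtt{NOT}_{\mathfrak T}^{(At\beta)}$, $\sqrt{\mathtt I}_{\mathfrak T}^{(At\beta)}$, $\sqrt{\mathtt{NOT}}_{\mathfrak T}^{(At\beta)}$ for $\lnot\beta,\sqrt{id}\beta,\sqrt\lnot\beta$; $\mathtt{XOR}_{\mathfrak T}^{(At\beta',At\beta'')}$ for $\beta'\uplus\beta''$; $\mathtt T_{\mathfrak T}^{(At\beta',At\beta'',At\beta''')}$ for $\intercal(\beta',\beta'',\beta''')$. Holistic model: a map $\mathtt{Hol}_{\mathfrak T}$ assigning to each level $Level_i^\alpha$ of each formula $\alpha$ a qumix in $\mathfrak D(\mathcal H^{(At\alpha)})$ such that (a) $\mathtt{Hol}_{\mathfrak T}(Level_i^\alpha)={}^{\mathfrak D}G^\alpha_{\mathfrak T(i)}(\mathtt{Hol}_{\mathfrak T}(Level_{i+1}^\alpha))$ for $1\le i<h$; (b) (normality) for each $\gamma$, with the contextual meaning of the occurrence $\beta_j$ in $Level_i^\gamma=(\beta_1,\dots,\beta_r)$ defined as $Red^{(j)}_{[At\beta_1,\dots,At\beta_r]}(\mathtt{Hol}_{\mathfrak T}(Level_i^\gamma))$, all occurrences of the same subformula $\beta$ in the tree of $\gamma$ have the same contextual meaning, denoted $\mathtt{Hol}^\gamma_{\mathfrak T}(\beta)$; (c) every occurrence of $\mathbf f$ (resp. $\mathbf t$) has contextual meaning $^{\mathfrak T}P_0^{(1)}$ (resp. $^{\mathfrak T}P_1^{(1)}$). Logical consequence: $\alpha\vDash\beta$ iff for every truth-perspective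 $\mathfrak T$, every formula $\gamma$ having both $\alpha$ and $\beta$ as subformulas (a formula counts as a subformula of itself), and every holistic model $\mathtt{Hol}_{\mathfrak T}$, $\mathtt{Hol}^\gamma_{\mathfrak T}(\alpha)\preceq_{\mathfrak T}\mathtt{Hol}^\gamma_{\mathfrak T}(\beta)$; $\alpha\nvDash\beta$ means that $\alpha\vDash\beta$ fails. *)

From mathcomp Require Import all_boot all_algebra.
From mathcomp Require Import complex Rstruct.
Set Implicit Arguments.
Unset Strict Implicit.
Unset Printing Implicit Defensive.
Import GRing.Theory Num.Theory.
Local Open Scope ring_scope.

Definition C : numClosedFieldType := Rdefinitions.R[i].

(** Canonical basis of H^(n) = (C^2)^{\otimes n}: |x_1 ... x_n>, encoded as
    x : 'I_n -> bool (position k is the qubit x_{k+1}; false = |0>, true = |1>). *)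
Definition B (n : nat) := {ffun 'I_n -> bool}.

(** k-th bit (0-based) of a basis vector, false when out of range. *)
Definition bit n (x : B n) (k : nat) : bool :=
  if @insub nat (fun k => k < n)%N 'I_n k is Some i then x i else false.

Definition setbit n (x : B n) (k : nat) (b : bool) : B n :=
  [ffun i : 'I_n => if val i == k then b else x i].

(** Operators on H^(n), given by their matrix entries <x|A|y> in the
    canonical basis. *)
Definition op (n : nat) := B n -> B n -> C.

Definition opeq n (A A' : op n) : Prop := forall x y, A x y = A' x y.
Definition mulop n (A A' : op n) : op n := fun x y => \sum_(z : B n) A x z * A' z y.
Definition adjop n (A : op n) : op n := fun x y => (A y x)^*.
Definition idop n : op n := fun x y => (x == y)%:R.
Arguments idop n : clear implicits.
Definition trop n (A : op n) : C := \sum_(x : B n) A x x.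

Definition is_density n (rho : op n) : Prop :=
  (forall v : B n -> C, 0 <= \sum_(x : B n) \sum_(y : B n) (v x)^* * rho x y * v y)
  /\ trop rho = 1.

(** Truth perspectives: unitary operators on C^2 (entries T a b = <a|T|b>). *)
Definition unitary2 (T : bool -> bool -> C) : Prop :=
  (forall a b, \sum_(c : bool) T a c * (T b c)^* = (a == b)%:R) /\
  (forall a b, \sum_(c : bool) (T c a)^* * T c b = (a == b)%:R).

Definition Tn (T : bool -> bool -> C) n : op n :=
  fun x y => \prod_(i < n) T (x i) (y i).
Arguments Tn T n : clear implicits.

Definition conjT (T : bool -> bool -> C) n (G : op n) : op n :=
  mulop (Tn T n) (mulop G (adjop (Tn T n))).

Definition chan n (G rho : op n) : op n := mulop G (mulop rho (adjop G)).

Definition P1 (T : bool -> bool -> C) n : op n :=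
  fun x y => \sum_(z : B n | bit z n.-1) Tn T n x z * (Tn T n y z)^*.
Definition P0 (T : bool -> bool -> C) n : op n :=
  fun x y => \sum_(z : B n | ~~ bit z n.-1) Tn T n x z * (Tn T n y z)^*.

Arguments P1 T n : clear implicits.
Arguments P0 T n : clear implicits.
Definition prob (T : bool -> bool -> C) n (rho : op n) : C := trop (mulop (P1 T n) rho).

(** Gates (matrix entries <x|G|y>, where G|y> is given on basis vectors). *)
Definition NOTg n : op n := fun x y => (x == setbit y n.-1 (~~ bit y n.-1))%:R.

Arguments NOTg n : clear implicits.
Definition same_but_last n (x y : B n) : bool :=
  [forall i : 'I_n, (val i != n.-1) ==> (x i == y i)].

Definition sqrtIg n : op n := fun x y =>
  if same_but_last x y then
    (if bit x n.-1 == bit y n.-1 then (if bit y n.-1 then -1 else 1) / sqrtC 2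
     else 1 / sqrtC 2)
  else 0.

Arguments sqrtIg n : clear implicits.
Definition sqrtNOTg n : op n := fun x y =>
  if same_but_last x y then
    (if bit x n.-1 == bit y n.-1 then (1 - 'i) / 2 else (1 + 'i) / 2)
  else 0.

Arguments sqrtNOTg n : clear implicits.
Definition XORg m n : op (m + n) := fun x y =>
  (x == setbit y (m + n).-1 (addb (bit y m.-1) (bit y (m + n).-1)))%:R.

Arguments XORg m n : clear implicits.
Definition TOFg m n p : op (m + n + p) := fun x y =>
  (x == setbit y (m + n + p).-1
          (addb (bit y m.-1 && bit y (m + n).-1) (bit y (m + n + p).-1)))%:R.

Arguments TOFg m n p : clear implicits.

Inductive form : Type :=
  | Atom of nat
  | Tr
  | Fa
  | Neg of form
  | Sqid of form
  | Sqneg of form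
  | Xor of form & form
  | Tof of form & form & form.

Definition And (a b : form) : form := Tof a b Fa.
Definition Or (a b : form) : form := Neg (And (Neg a) (Neg b)).

Fixpoint At (a : form) : nat :=
  match a with
  | Atom _ | Tr | Fa => 1
  | Neg b | Sqid b | Sqneg b => At b
  | Xor b c => At b + At c
  | Tof b c d => At b + At c + At d
  end.

Fixpoint subf (a g : form) : Prop :=
  a = g \/
  match g with
  | Atom _ | Tr | Fa => False
  | Neg b | Sqid b | Sqneg b => subf a b
  | Xor b c => subf a b \/ subf a c
  | Tof b c d => subf a b \/ subf a c \/ subf a d
  end.

Definition expand (a : form) : seq form :=
  match a with
  | Atom _ | Tr | Fa => [:: a]
  | Neg b | Sqid b | Sqneg b => [:: b]
  | Xor b c => [:: b; c]
  | Tof b c d => [:: b; c; d]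
  end.

Fixpoint level_aux (g : form) (k : nat) : seq form :=
  match k with
  | 0 => [:: g]
  | k'.+1 => flatten (map expand (level_aux g k'))
  end.

(** Level_i^g, for i >= 1. *)
Definition level (g : form) (i : nat) : seq form := level_aux g i.-1.

Fixpoint depth (a : form) : nat :=
  match a with
  | Atom _ | Tr | Fa => 0
  | Neg b | Sqid b | Sqneg b => (depth b).+1
  | Xor b c => (maxn (depth b) (depth c)).+1
  | Tof b c d => (maxn (depth b) (maxn (depth c) (depth d))).+1
  end.

(** h: the index of the last level (all entries atomic). *)
Definition height (g : form) : nat := (depth g).+1.

(** Position of the first qubit of the j-th entry (0-based) of a level. *)
Definition offset (l : seq form) (j : nat) : nat := sumn (map At (take j l)).

Definition restr N (x : B N) (off m : nat) : B m := [ffun i : 'I_m => bit x (off + i)].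

Arguments restr N x off m : clear implicits.

Definition local_gate (T : bool -> bool -> C) (b : form) : op (At b) :=
  match b as b0 return op (At b0) with
  | Atom _ | Tr | Fa => idop 1
  | Neg a => conjT T (NOTg (At a))
  | Sqid a => conjT T (sqrtIg (At a))
  | Sqneg a => conjT T (sqrtNOTg (At a))
  | Xor a c => conjT T (XORg (At a) (At c))
  | Tof a c d => conjT T (TOFg (At a) (At c) (At d))
  end.

Arguments local_gate T b : clear implicits.

Fixpoint layer (T : bool -> bool -> C) N (l : seq form) (off : nat) : op N :=
  match l with
  | [::] => fun _ _ => 1
  | b :: l' => fun x y =>
      local_gate T b (restr N x off (At b)) (restr N y off (At b)) * layer T l' (off + At b) x y
  end.

Arguments layer T N l off : clear implicits.

Definition levelgate (T : bool -> bool -> C) (g : form) (i : nat) : op (At g) :=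
  layer T (At g) (level g i) 0.

Arguments levelgate T g i : clear implicits.

(** Reduced state on the block [off, off + m) (partial trace over the rest). *)
Definition merge N m (z : B N) (off : nat) (x : B m) : B N :=
  [ffun i : 'I_N => if (off <= i < off + m)%N then bit x (i - off) else z i].

Definition red N (rho : op N) (off m : nat) : op m := fun x y =>
  \sum_(z : B N | [forall i : 'I_N, (off <= i < off + m)%N ==> ~~ z i])
     rho (merge z off x) (merge z off y).

Arguments red N rho off m : clear implicits.

Definition occurs (g b : form) (i j : nat) : Prop :=
  [/\ (1 <= i <= height g)%N, (j < size (level g i))%N & nth Fa (level g i) j = b].

Definition ctx (Hol : forall g : form, nat -> op (At g)) (g b : form) (i j : nat) : op (At b) :=
  red (At g) (Hol g i) (offset (level g i) j) (At b).

Arguments ctx Hol g b i j : clear implicits.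

(** Holistic models (Hol g i = Hol_T(Level_i^g)). *)
Definition holistic (T : bool -> bool -> C) (Hol : forall g : form, nat -> op (At g)) : Prop :=
  [/\ (forall g i, (1 <= i <= height g)%N -> is_density (Hol g i)),
      (forall g i, (1 <= i < height g)%N ->
         opeq (Hol g i) (chan (levelgate T g i) (Hol g i.+1))),
      (forall g b i j i' j', occurs g b i j -> occurs g b i' j' ->
         opeq (ctx Hol g b i j) (ctx Hol g b i' j')),
      (forall g i j, occurs g Fa i j -> opeq (ctx Hol g Fa i j) (P0 T 1)) &
      (forall g i j, occurs g Tr i j -> opeq (ctx Hol g Tr i j) (P1 T 1))].

Definition entails (a b : form) : Prop :=
  forall (T : bool -> bool -> C), unitary2 T ->
  forall g : form, subf a g -> subf b g ->
  forall Hol : forall g : form, nat -> op (At g), holistic T Hol ->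
  forall i j i' j', occurs g a i j -> occurs g b i' j' ->
    prob T (ctx Hol g a i j) <= prob T (ctx Hol g b i' j').

From Pilot Require Import Defs.
From HB Require Import structures.
From mathcomp Require Import all_boot all_algebra.
From mathcomp Require Import complex Rstruct ring zify.

(* All counterexamples live in the identity truth perspective.  Fix a context
   formula g and finitely many classical valuations v, each assigning a bit to
   every qubit carrying an atomic occurrence.  Feeding the basis states |v k>
   through the gates of the syntactical tree gives, level by level, a product
   of pure states; the uniform mixture of these products over the valuations
   satisfies the chain condition because the gates map one level onto the next,
   and it is normal as soon as every subformula occurring at two different
   qubits gets the same reduced mixture, a finite check.  When the gates
   involved are NOT, XOR and Toffoli, each reduced state is a mixture of basis
   states and its probability of truth is the proportion of valuations making
   the occurrence classically true.  So an argument form fails as soon as some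
   context and some valuations make the premise true more often than the
   conclusion; all other formulas get the model of the all-false valuation. *)

Set Implicit Arguments.
Unset Strict Implicit.
Unset Printing Implicit Defensive.
Import GRing.Theory Num.Theory.
Local Open Scope ring_scope.

Local Notation form := Defs.form.

(** * Bits of basis vectors *)

Lemma bitE N (x : B N) (i : 'I_N) : bit x i = x i.
Proof. by rewrite /bit insubT //= => lt_iN; congr (x _); apply: val_inj. Qed.

Lemma bit_out N (x : B N) k : (N <= k)%N -> bit x k = false.
Proof. by move=> le_Nk; rewrite /bit insubF // ltnNge le_Nk. Qed.

Lemma bitP N (x y : B N) : (forall k, (k < N)%N -> bit x k = bit y k) -> x = y.
Proof. by move=> eq_xy; apply/ffunP=> i; rewrite -!bitE eq_xy. Qed.

Lemma bit_ffun N (x : B N) (f : nat -> bool) k :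
  (forall i : 'I_N, x i = f i) -> bit x k = (k < N)%N && f k.
Proof.
move=> xE; case: (ltnP k N) => [lt_kN | le_Nk]; last by rewrite bit_out.
by rewrite /bit insubT /= xE.
Qed.
Arguments bit_ffun {N x} f k.

Lemma bit_restr N (x : B N) off m k :
  bit (restr N x off m) k = (k < m)%N && bit x (off + k).
Proof. by apply: (bit_ffun (fun k => bit x (off + k))) => i; rewrite ffunE. Qed.

Lemma bit_merge N m (z : B N) off (u : B m) k :
  bit (Defs.merge z off u) k =
  (k < N)%N && (if (off <= k < off + m)%N then bit u (k - off) else bit z k).
Proof.
by apply: (bit_ffun (fun k => if (off <= k < off + m)%N then bit u (k - off) else bit z k))
  => i; rewrite ffunE bitE.
Qed.

Lemma bit_setbit N (x : B N) j b k :
  bit (setbit x j b) k = (k < N)%N && (if k == j then b else bit x k).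
Proof. by apply: (bit_ffun (fun k => if k == j then b else bit x k)) => i; rewrite ffunE bitE. Qed.

Lemma bit_setbit_eq N (x : B N) j b : (j < N)%N -> bit (setbit x j b) j = b.
Proof. by move=> lt_jN; rewrite bit_setbit lt_jN eqxx. Qed.

Lemma bit_setbit_neq N (x : B N) j b k : k != j -> bit (setbit x j b) k = bit x k.
Proof.
move=> /negbTE neq_kj; rewrite bit_setbit neq_kj.
by case: (ltnP k N) => // le_Nk; rewrite bit_out.
Qed.

Lemma setbit_setbit N (x : B N) j b b' : setbit (setbit x j b) j b' = setbit x j b'.
Proof.
apply: bitP => k lt_kN; rewrite !bit_setbit lt_kN /=.
by case: eqP => // ->; rewrite bit_setbit_eq.
Qed.

Lemma setbit_bit N (x : B N) j : setbit x j (bit x j) = x.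
Proof. by apply: bitP => k lt_kN; rewrite bit_setbit lt_kN; case: eqP => // ->. Qed.

Lemma restr_merge N m (z : B N) off (u : B m) :
  (off + m <= N)%N -> restr N (Defs.merge z off u) off m = u.
Proof.
move=> le_N; apply: bitP => k lt_km.
rewrite bit_restr lt_km bit_merge /= leq_addr ltn_add2l lt_km addKn.
by rewrite (leq_trans _ le_N) // ltn_add2l.
Qed.

Lemma restr_merge_lo N m (z : B N) off (u : B m) o m' :
  (o + m' <= off)%N -> restr N (Defs.merge z off u) o m' = restr N z o m'.
Proof.
move=> le_off; apply: bitP => k lt_km'.
rewrite !bit_restr lt_km' /= bit_merge.
have -> : (off <= o + k)%N = false.
  by apply/negbTE; rewrite -ltnNge (leq_trans _ le_off) // ltn_add2l.
by case: (ltnP (o + k) N) => //= le_N; rewrite bit_out.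
Qed.

Lemma restr_merge_hi N m (z : B N) off (u : B m) o m' :
  (off + m <= o)%N -> restr N (Defs.merge z off u) o m' = restr N z o m'.
Proof.
move=> le_o; apply: bitP => k lt_km'.
rewrite !bit_restr lt_km' /= bit_merge.
have -> : (o + k < off + m)%N = false.
  by apply/negbTE; rewrite -leqNgt (leq_trans le_o) // leq_addr.
by rewrite andbF; case: (ltnP (o + k) N) => //= le_N; rewrite bit_out.
Qed.

Lemma restr_restr N (y : B N) o M p m :
  (p + m <= M)%N -> restr M (restr N y o M) p m = restr N y (o + p) m.
Proof.
move=> le_M; apply: bitP => k lt_km.
by rewrite !bit_restr lt_km /= addnA (leq_trans _ le_M) // ltn_add2l.
Qed.

Definition zeroB m : B m := [ffun => false].

Lemma bit_zeroB m k : bit (zeroB m) k = false.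
Proof. by rewrite (bit_ffun (fun _ => false)) ?andbF // => i; rewrite ffunE. Qed.

Definition low_zero N (off : nat) (x : B N) : bool :=
  [forall i : 'I_N, (i < off)%N ==> ~~ x i].

Lemma low_zeroP N off (x : B N) :
  reflect (forall k, (k < off)%N -> bit x k = false) (low_zero off x).
Proof.
apply: (iffP forallP) => [x_low k lt_k | x_low i].
  case: (ltnP k N) => [lt_kN | ]; last exact: bit_out.
  by have := x_low (Ordinal lt_kN); rewrite /= lt_k -(bitE x (Ordinal lt_kN)) => /negbTE.
by apply/implyP => lt_i; rewrite -bitE x_low.
Qed.

Lemma low_zero0 N (x : B N) : low_zero 0 x.
Proof. exact/low_zeroP. Qed.

Lemma sum_delta (T : finType) (a : T) (F : T -> C) :
  \sum_(u : T) (a == u)%:R * F u = F a.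
Proof.
rewrite (bigD1 a) //= eqxx mul1r big1 ?addr0 // => u.
by rewrite eq_sym => /negbTE ->; rewrite mul0r.
Qed.

Lemma sum_low_zero_split N m off (F : B N -> C) : (off + m <= N)%N ->
  \sum_(x | low_zero off x) F x =
  \sum_(u : B m) \sum_(x | low_zero (off + m) x) F (Defs.merge x off u).
Proof.
move=> le_N.
transitivity (\sum_(x | low_zero off x) \sum_(u : B m) (restr N x off m == u)%:R * F x).
  by apply: eq_bigr => x _; rewrite (sum_delta _ (fun _ => F x)).
rewrite exchange_big /=; apply: eq_bigr => u _.
transitivity (\sum_(x | low_zero off x && (restr N x off m == u)) F x).
  by rewrite big_mkcondr /=; apply: eq_bigr => x _; case: eqP; rewrite ?mul1r ?mul0r.
rewrite (reindex_onto (fun x => Defs.merge x off u) (fun x => Defs.merge x off (zeroB m)));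
  last first.
  move=> x /andP[_ /eqP <-]; apply: bitP => k lt_kN.
  rewrite bit_merge lt_kN /=; case: ifP => [/andP[le_k lt_k] | out_k].
    by rewrite bit_restr subnKC // -(ltn_add2l off) subnKC // lt_k.
  by rewrite bit_merge lt_kN out_k.
apply: eq_bigl => x; rewrite restr_merge // eqxx andbT.
apply/andP/low_zeroP => [[/low_zeroP x_low /eqP x_fix] k lt_k | x_low]; last first.
  split.
    by apply/low_zeroP => k lt_k; rewrite bit_merge (leqNgt off k) lt_k /= x_low ?andbF // ltn_addr.
  apply/eqP/bitP => k lt_kN; rewrite bit_merge lt_kN /=.
  case: ifP => [/andP[_ lt_k] | out_k]; first by rewrite bit_zeroB x_low.
  by rewrite bit_merge lt_kN out_k.
case: (ltnP k off) => [lt_koff | le_offk].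
  have := x_low k lt_koff; rewrite bit_merge (leqNgt off k) lt_koff /=.
  by case: ltnP => // le_Nk _; rewrite bit_out.
have := congr1 (fun y => bit y k) x_fix; rewrite !bit_merge bit_zeroB le_offk lt_k /=.
by case: (k < N)%N.
Qed.

Lemma sum_low_zero_all N (F : B N -> C) : \sum_(x | low_zero N x) F x = F (zeroB N).
Proof.
rewrite (big_pred1 (zeroB N)) // => x /=; apply/low_zeroP/eqP => [x_low | ->].
  by apply: bitP => k lt_kN; rewrite x_low // bit_zeroB.
by move=> k _; rewrite bit_zeroB.
Qed.

(** * Tensor products of blocks *)

Definition vec n := B n -> C.
Definition block := {m : nat & vec m}.
Definition Block m (f : vec m) : block := Tagged vec f.

Fixpoint tens N (fs : seq block) (off : nat) (x : B N) : C :=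
  if fs is f :: fs' then tagged f (restr N x off (tag f)) * tens fs' (off + tag f) x else 1.

Definition width (fs : seq block) : nat := sumn (map tag fs).

Lemma width_cons f fs : width (f :: fs) = (tag f + width fs)%N.
Proof. by []. Qed.

Lemma width_cat fs1 fs2 : width (fs1 ++ fs2) = (width fs1 + width fs2)%N.
Proof. by rewrite /width map_cat sumn_cat. Qed.

Lemma tens_cat N fs1 fs2 off (x : B N) :
  tens (fs1 ++ fs2) off x = tens fs1 off x * tens fs2 (off + width fs1) x.
Proof.
elim: fs1 off => [|f fs IH] off /=; first by rewrite mul1r addn0.
by rewrite IH mulrA addnA.
Qed.

Lemma tens_merge_lo N m fs o off (z : B N) (u : B m) :
  (o + width fs <= off)%N -> tens fs o (Defs.merge z off u) = tens fs o z.
Proof.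
elim: fs o => [|f fs IH] o //=; rewrite width_cons addnA => le_off.
by rewrite restr_merge_lo ?IH // (leq_trans _ le_off) ?leq_addr.
Qed.

Lemma tens_merge_hi N m fs o off (z : B N) (u : B m) :
  (off + m <= o)%N -> tens fs o (Defs.merge z off u) = tens fs o z.
Proof.
elim: fs o => [|f fs IH] o //= le_o.
by rewrite restr_merge_hi // IH // (leq_trans le_o) // leq_addr.
Qed.

Lemma sum_tens_low_zero N fs off : (off + width fs)%N = N ->
  \sum_(x : B N | low_zero off x) tens fs off x = \prod_(f <- fs) \sum_u tagged f u.
Proof.
elim: fs off => [|[m f] fs IH] off /= sizeN.
  by rewrite big_nil -sizeN addn0 sum_low_zero_all.
have le_N : (off + m <= N)%N by rewrite -sizeN addnA leq_addr.
rewrite big_cons (sum_low_zero_split _ le_N) big_distrl /=.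
apply: eq_bigr => u _; rewrite -(IH (off + m)%N) -?addnA // big_distrr /=.
by apply: eq_bigr => x _; rewrite restr_merge // tens_merge_hi.
Qed.

Lemma sum_tens N fs : width fs = N ->
  \sum_(x : B N) tens fs 0 x = \prod_(f <- fs) \sum_u tagged f u.
Proof.
by move=> sizeN; rewrite -(@sum_tens_low_zero N fs 0) //; apply: eq_bigl => x; rewrite low_zero0.
Qed.

Definition outer n (v : vec n) : op n := fun x y => v x * (v y)^*.
Definition sqnorm n (v : vec n) : C := \sum_x v x * (v x)^*.
Definition sqblock (f : block) : block := Block (fun u => tagged f u * (tagged f u)^*).

Lemma width_sqblock fs : width (map sqblock fs) = width fs.
Proof. by elim: fs => //= f fs IH; rewrite !width_cons IH. Qed.

Lemma tens_sqblock N fs off (x : B N) :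
  tens fs off x * (tens fs off x)^* = tens (map sqblock fs) off x.
Proof.
elim: fs off => [|f fs IH] off /=; first by rewrite rmorph1 mulr1.
by rewrite -IH rmorphM mulrACA.
Qed.

Lemma sum_tens_sqblock N fs : width fs = N ->
  \sum_(x : B N) tens (map sqblock fs) 0 x = \prod_(f <- fs) sqnorm (tagged f).
Proof. by move=> sizeN; rewrite sum_tens ?width_sqblock // big_map. Qed.

Lemma sqnorm_tens N fs : width fs = N ->
  sqnorm (tens fs 0 : vec N) = \prod_(f <- fs) sqnorm (tagged f).
Proof.
move=> sizeN; rewrite -(@sum_tens_sqblock N) //.
by apply: eq_bigr => x _; rewrite tens_sqblock.
Qed.

Lemma block_zeroE N off m (z : B N) : (off + m <= N)%N ->
  [forall i : 'I_N, (off <= i < off + m)%N ==> ~~ z i] = (restr N z off m == zeroB m).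
Proof.
move=> le_N; apply/forallP/eqP => [z_blk | z_blk i].
  apply: bitP => k lt_km; rewrite bit_restr bit_zeroB lt_km /=.
  have lt_N : (off + k < N)%N by apply: leq_trans le_N; rewrite ltn_add2l.
  have := z_blk (Ordinal lt_N); rewrite /= leq_addr ltn_add2l lt_km.
  by rewrite -(bitE z (Ordinal lt_N)) => /negbTE.
apply/implyP => /andP[le_i lt_i].
have := congr1 (fun y => bit y (i - off)) z_blk.
by rewrite bit_restr bit_zeroB subnKC // -(ltn_add2l off) subnKC // lt_i bitE /= => ->.
Qed.

Lemma red_outer_tens N fs1 m (f : vec m) fs2 :
  (width fs1 + m + width fs2)%N = N ->
  \prod_(g <- fs1) sqnorm (tagged g) = 1 -> \prod_(g <- fs2) sqnorm (tagged g) = 1 ->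
  forall x y, red N (outer (tens (fs1 ++ Block f :: fs2) 0)) (width fs1) m x y = outer f x y.
Proof.
move=> sizeN norm1 norm2 x y.
have le_N : (width fs1 + m <= N)%N by rewrite -sizeN leq_addr.
pose rest (z : B N) := tens (map sqblock fs1) 0 z * tens (map sqblock fs2) (width fs1 + m) z.
pose ws := map sqblock fs1 ++ Block (fun u : B m => (u == zeroB m)%:R) :: map sqblock fs2.
have sum_rest : \sum_(z | restr N z (width fs1) m == zeroB m) rest z = 1.
  rewrite big_mkcond /=; transitivity (\sum_(z : B N) tens ws 0 z).
    apply: eq_bigr => z _; rewrite tens_cat /= width_sqblock add0n.
    rewrite /rest; case: (restr N z _ m == _); by rewrite ?mul1r ?mul0r ?mulr0.
  rewrite (@sum_tens N); last by rewrite width_cat width_cons !width_sqblock addnA.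
  rewrite big_cat big_cons /= !big_map.
  rewrite (eq_bigr (fun g => sqnorm (tagged g))) // norm1 mul1r.
  rewrite (eq_bigr (fun g => sqnorm (tagged g))) // norm2 mulr1.
  by rewrite (eq_bigr (fun u => (zeroB m == u)%:R * 1)) ?sum_delta // => u _; rewrite eq_sym mulr1.
rewrite /red -[RHS]mulr1 -sum_rest big_distrr /=.
apply: eq_big => [z | z]; first exact: block_zeroE.
rewrite block_zeroE // => /eqP z_blk.
rewrite /outer !tens_cat /= add0n !restr_merge //.
rewrite !(tens_merge_lo _ _ (leqnn _)) !(tens_merge_hi fs2 _ _ (leqnn _)).
rewrite /rest -!tens_sqblock !rmorphM /=.
ring.
Qed.

(** * The identity truth perspective *)

Definition idT : bool -> bool -> C := fun a b => (a == b)%:R.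

Lemma unitary_idT : unitary2 idT.
Proof.
by split=> a b; rewrite big_bool /idT; case: a; case: b;
  rewrite /= ?conjC_nat ?mulr1 ?mulr0 ?mul0r ?addr0 ?add0r.
Qed.

Lemma Tn_idT n (x y : B n) : Tn idT n x y = (x == y)%:R.
Proof.
rewrite /Tn /idT; have [->|neq_xy] := eqVneq x y.
  by rewrite big1 // => i _; rewrite eqxx.
have [i neq_i] : exists i, x i != y i.
  by apply/existsP; apply: contraNT neq_xy; rewrite negb_exists => /forallP eq_i;
    apply/eqP/ffunP => i; apply/eqP; rewrite -[_ == _]negbK eq_i.
by rewrite (bigD1 i) //= (negbTE neq_i) mul0r.
Qed.

Lemma conjT_idT n (G : op n) x y : conjT idT G x y = G x y.
Proof.
rewrite /conjT /mulop; under eq_bigr => z _ do rewrite Tn_idT.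
rewrite sum_delta; under eq_bigr => z _ do rewrite /adjop Tn_idT conjC_nat mulrC.
by rewrite sum_delta.
Qed.

Lemma proj_idT n (b : bool) x y :
  \sum_(z : B n | bit z n.-1 == b) Tn idT n x z * (Tn idT n y z)^* =
  ((x == y) && (bit x n.-1 == b))%:R.
Proof.
rewrite big_mkcond /=; under eq_bigr => z _ do rewrite !Tn_idT conjC_nat.
rewrite (eq_bigr (fun z => (x == z)%:R * (if bit x n.-1 == b then (y == x)%:R else 0))).
  by rewrite sum_delta (eq_sym y x); case: (x == y); case: (bit x n.-1 == b).
move=> z _; have [<-|neq] := eqVneq x z.
  by case: (bit x n.-1 == b); rewrite ?mul1r ?mul0r.
by case: (bit z n.-1 == b); rewrite ?mul0r.
Qed.

Lemma P1_idT n x y : P1 idT n x y = ((x == y) && bit x n.-1)%:R.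
Proof. by rewrite /P1 -(eq_bigl _ _ (fun z => eqb_id _)) proj_idT eqb_id. Qed.

Lemma P0_idT n x y : P0 idT n x y = ((x == y) && ~~ bit x n.-1)%:R.
Proof.
rewrite /P0 (eq_bigl (fun z => bit z n.-1 == false)) => [|z]; last by rewrite eqbF_neg.
by rewrite proj_idT eqbF_neg.
Qed.

Lemma prob_idT n (rho : op n) : prob idT rho = \sum_(x | bit x n.-1) rho x x.
Proof.
rewrite /prob /trop /mulop [RHS]big_mkcond /=; apply: eq_bigr => x _.
under eq_bigr => z _ do rewrite P1_idT -mulnb natrM -mulrA.
by rewrite sum_delta; case: (bit x n.-1); rewrite ?mul1r ?mul0r.
Qed.

(** * Gates acting on vectors *)

Definition mulopv n (G : op n) (w : vec n) : vec n := fun x => \sum_y G x y * w y.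

Lemma mulopv_conjT_idT n (G : op n) w x : mulopv (conjT idT G) w x = mulopv G w x.
Proof. by apply: eq_bigr => y _; rewrite conjT_idT. Qed.

Definition permop n (f : B n -> B n) : op n := fun x y => (x == f y)%:R.

Lemma mulopv_permop n (f : B n -> B n) (w : vec n) x :
  involutive f -> mulopv (permop f) w x = w (f x).
Proof.
move=> f_inv; rewrite /mulopv -(sum_delta (f x) w); apply: eq_bigr => y _.
by rewrite /permop (canF_eq f_inv).
Qed.

Lemma sqnorm_permop n (f : B n -> B n) (w : vec n) :
  involutive f -> sqnorm (mulopv (permop f) w) = sqnorm w.
Proof.
move=> f_inv; rewrite /sqnorm (reindex_inj (inv_inj f_inv)) /=.
by apply: eq_bigr => x _; rewrite !mulopv_permop // f_inv.
Qed.

Lemma setbit_involutive N j (h : B N -> bool) : (j < N)%N ->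
  (forall y b, h (setbit y j b) = h y) ->
  involutive (fun y : B N => setbit y j (h y (+) bit y j)).
Proof.
move=> lt_jN h_setbit y; apply: bitP => k lt_kN.
rewrite !bit_setbit lt_kN /=; case: eqP => [->|_] //.
by rewrite h_setbit lt_jN eqxx addbA addbb.
Qed.

Definition flip_last n (y : B n) : B n := setbit y n.-1 (~~ bit y n.-1).

Definition xor_last m n (y : B (m + n)) : B (m + n) :=
  setbit y (m + n).-1 (bit y m.-1 (+) bit y (m + n).-1).

Definition toffoli_last m n p (y : B (m + n + p)) : B (m + n + p) :=
  setbit y (m + n + p).-1 ((bit y m.-1 && bit y (m + n).-1) (+) bit y (m + n + p).-1).

Lemma NOTgE n : NOTg n = permop (@flip_last n).
Proof. by []. Qed.

Lemma XORgE m n : XORg m n = permop (@xor_last m n).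
Proof. by []. Qed.

Lemma TOFgE m n p : TOFg m n p = permop (@toffoli_last m n p).
Proof. by []. Qed.

Lemma flip_last_inv n : (0 < n)%N -> involutive (@flip_last n).
Proof. by move=> n_gt0; apply: (setbit_involutive (h := fun _ => true)); rewrite ?ltn_predL. Qed.

Lemma xor_last_inv m n : (0 < m)%N -> (0 < n)%N -> involutive (@xor_last m n).
Proof.
move=> m_gt0 n_gt0; apply: (setbit_involutive (h := fun y => bit y m.-1)) => [|y b]; first lia.
by rewrite bit_setbit_neq //; lia.
Qed.

Lemma toffoli_last_inv m n p :
  (0 < m)%N -> (0 < n)%N -> (0 < p)%N -> involutive (@toffoli_last m n p).
Proof.
move=> m_gt0 n_gt0 p_gt0.
apply: (setbit_involutive (h := fun y => bit y m.-1 && bit y (m + n).-1)) => [|y b]; first lia.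
by rewrite !bit_setbit_neq //; lia.
Qed.

Definition lastop n (c : bool -> bool -> C) : op n := fun x y =>
  if same_but_last x y then c (bit x n.-1) (bit y n.-1) else 0.
Arguments lastop n c : clear implicits.

Lemma same_but_lastE n (x y : B n) b : (0 < n)%N ->
  same_but_last x y && (bit y n.-1 == b) = (y == setbit x n.-1 b).
Proof.
move=> n_gt0; apply/idP/eqP => [/andP[/forallP xy_eq /eqP yb] | ->].
  apply: bitP => k lt_kn; rewrite bit_setbit lt_kn /=; case: eqP => [->|/eqP neq_k] //.
  by have /= := xy_eq (Ordinal lt_kn); rewrite neq_k -!(bitE _ (Ordinal lt_kn)) => /eqP.
rewrite bit_setbit_eq ?ltn_predL // eqxx andbT.
by apply/forallP => i; apply/implyP => neq_i; rewrite -!bitE bit_setbit_neq.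
Qed.

Lemma mulopv_lastop n (c : bool -> bool -> C) (w : vec n) x : (0 < n)%N ->
  mulopv (lastop n c) w x =
  c (bit x n.-1) false * w (setbit x n.-1 false) + c (bit x n.-1) true * w (setbit x n.-1 true).
Proof.
move=> n_gt0; have lt_last : (n.-1 < n)%N by rewrite ltn_predL.
rewrite /mulopv /lastop.
under eq_bigr => y _ do rewrite (fun_if (fun g => g * w y)) mul0r.
rewrite -big_mkcond (bigID (fun y => bit y n.-1)) /= addrC.
congr (_ + _).
  rewrite (big_pred1 (setbit x n.-1 false)) ?bit_setbit_eq // => y /=.
  by rewrite -same_but_lastE // eqbF_neg.
rewrite (big_pred1 (setbit x n.-1 true)) ?bit_setbit_eq // => y /=.
by rewrite -same_but_lastE // eqb_id.
Qed.

Lemma sum_pairs N L (h : B N -> C) : (L < N)%N ->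
  \sum_x h x = \sum_(x | ~~ bit x L) (h (setbit x L false) + h (setbit x L true)).
Proof.
move=> lt_LN; rewrite big_split /= (bigID (fun x => bit x L)) /= addrC.
congr (_ + _).
  by apply: eq_bigr => x /negbTE x_L; rewrite -x_L setbit_bit.
rewrite (reindex_onto (fun x => setbit x L true) (fun x => setbit x L false)) => [|x x_L].
  apply: eq_bigl => x; rewrite bit_setbit_eq // setbit_setbit.
  by apply/eqP/idP => [<-|/negbTE x_L]; rewrite ?bit_setbit_eq // -x_L setbit_bit.
by rewrite setbit_setbit -[in RHS](setbit_bit x L) x_L.
Qed.

Lemma sqnorm_unitary2 (c : bool -> bool -> C) (a b : C) :
  (forall i j, \sum_(k : bool) c k i * (c k j)^* = (i == j)%:R) ->
  \sum_(k : bool) (c k false * a + c k true * b) * (c k false * a + c k true * b)^* =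
  a * a^* + b * b^*.
Proof.
move=> c_unitary.
transitivity (\sum_(i : bool) \sum_(j : bool)
    (if i then b else a) * (if j then b else a)^* * \sum_(k : bool) c k i * (c k j)^*).
  by rewrite !big_bool /= !rmorphD !rmorphM /=; ring.
under eq_bigr => i _ do under eq_bigr => j _ do rewrite c_unitary.
by rewrite !big_bool /= !mulr1 !mulr0 addr0 add0r addrC.
Qed.

Lemma sqnorm_lastop n (c : bool -> bool -> C) (w : vec n) : (0 < n)%N ->
  (forall i j, \sum_(k : bool) c k i * (c k j)^* = (i == j)%:R) ->
  sqnorm (mulopv (lastop n c) w) = sqnorm w.
Proof.
move=> n_gt0 c_unitary; have lt_last : (n.-1 < n)%N by rewrite ltn_predL.
rewrite /sqnorm !(sum_pairs _ lt_last); apply: eq_bigr => x _.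
rewrite !mulopv_lastop // !bit_setbit_eq // !setbit_setbit.
rewrite -(sqnorm_unitary2 (w (setbit x n.-1 false)) _ c_unitary).
by rewrite big_bool /= addrC.
Qed.

Definition sqrtI_coef (a b : bool) : C :=
  if a == b then (if b then -1 else 1) / sqrtC 2 else 1 / sqrtC 2.

Definition sqrtNOT_coef (a b : bool) : C :=
  if a == b then (1 - 'i) / 2 else (1 + 'i) / 2.

Lemma sqrtIgE n : sqrtIg n = lastop n sqrtI_coef.
Proof. by []. Qed.

Lemma sqrtNOTgE n : sqrtNOTg n = lastop n sqrtNOT_coef.
Proof. by []. Qed.

Lemma sqrtI_coef_unitary i j :
  \sum_(k : bool) sqrtI_coef k i * (sqrtI_coef k j)^* = (i == j)%:R.
Proof.
have s_real : (1 / sqrtC 2 : C)^* = 1 / sqrtC 2.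
  by rewrite conj_Creal // rpred_div ?rpred1 ?sqrtC_real ?ler0n.
have s_sq : (1 / sqrtC 2 : C) * (1 / sqrtC 2) = 1 / 2.
  by rewrite !div1r -invfM -expr2 sqrtCK.
rewrite big_bool /sqrtI_coef; case: i; case: j => /=;
  rewrite ?mulNr ?rmorphN /= ?mulrN ?opprK !s_real !s_sq ?addNr //.
all: by field.

Qed.

Lemma sqrtNOT_coef_unitary i j :
  \sum_(k : bool) sqrtNOT_coef k i * (sqrtNOT_coef k j)^* = (i == j)%:R.
Proof.
have conj_a : ((1 - 'i) / 2 : C)^* = (1 + 'i) / 2.
  by rewrite fmorph_div rmorphB /= rmorph1 conjCi opprK conjC_nat.
have conj_b : ((1 + 'i) / 2 : C)^* = (1 - 'i) / 2.
  by rewrite fmorph_div rmorphD /= rmorph1 conjCi conjC_nat.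
have one : 1 - ('i * 'i + 1) / 2 = 1 :> C by rewrite -expr2 sqrCi addNr mul0r subr0.
have zero : ('i * 'i + 1) / 2 = 0 :> C by rewrite -expr2 sqrCi addNr mul0r.
rewrite big_bool /sqrtNOT_coef; case: i; case: j => /=; rewrite ?conj_a ?conj_b.
all: by [rewrite -[RHS]one; field | rewrite -[RHS]zero; field].
Qed.

(** * States of formula occurrences *)

Lemma At_gt0 b : (0 < At b)%N.
Proof. by elim: b => //= [a a_gt0 c _ | a a_gt0 c _ d _]; rewrite !addn_gt0 a_gt0. Qed.

Definition basis n (e : B n) : vec n := fun u => (u == e)%:R.

Unset Implicit Arguments.

(* The pure state of an occurrence of [b] starting at qubit [o], when every
   atomic occurrence at qubit [k] is prepared in the basis state [v k]. *)
Fixpoint fstate (v : nat -> bool) (b : form) (o : nat) {struct b} : vec (At b) :=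
  match b as b0 return vec (At b0) with
  | Atom _ => basis [ffun => v o]
  | Tr => basis [ffun => true]
  | Fa => basis (zeroB 1)
  | Neg a => mulopv (NOTg (At a)) (fstate v a o)
  | Sqid a => mulopv (sqrtIg (At a)) (fstate v a o)
  | Sqneg a => mulopv (sqrtNOTg (At a)) (fstate v a o)
  | Xor a c => mulopv (XORg (At a) (At c))
      (tens [:: Block (fstate v a o); Block (fstate v c (o + At a))] 0)
  | Tof a c d => mulopv (TOFg (At a) (At c) (At d))
      (tens [:: Block (fstate v a o); Block (fstate v c (o + At a));
                Block (fstate v d (o + At a + At c))] 0)
  end.

Definition gate_input v (b : form) (o : nat) : vec (At b) :=
  match b as b0 return vec (At b0) with
  | (Atom _ | Tr | Fa) as a => fstate v a o
  | Neg a | Sqid a | Sqneg a => fstate v a o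
  | Xor a c => tens [:: Block (fstate v a o); Block (fstate v c (o + At a))] 0
  | Tof a c d => tens [:: Block (fstate v a o); Block (fstate v c (o + At a));
                          Block (fstate v d (o + At a + At c))] 0
  end.

Set Implicit Arguments.

Lemma mulopv_local_gate v b o u :
  mulopv (local_gate idT b) (gate_input v b o) u = fstate v b o u.
Proof.
move: u; case: b => [n| | |a|a|a|a c|a c d] u /=; rewrite ?mulopv_conjT_idT //;
  by rewrite /mulopv /idop sum_delta.
Qed.

Fixpoint state_blocks v (l : seq form) (o : nat) : seq block :=
  if l is b :: l' then Block (fstate v b o) :: state_blocks v l' (o + At b) else [::].

Fixpoint input_blocks v (l : seq form) (o : nat) : seq block :=
  if l is b :: l' then Block (gate_input v b o) :: input_blocks v l' (o + At b) else [::].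

Fixpoint gated_blocks N v (x : B N) (l : seq form) (o : nat) : seq block :=
  if l is b :: l' then
    Block (fun u => local_gate idT b (restr N x o (At b)) u * gate_input v b o u)
      :: gated_blocks v x l' (o + At b)
  else [::].

Lemma width_state_blocks v l o : width (state_blocks v l o) = sumn (map At l).
Proof. by elim: l o => //= b l IH o; rewrite width_cons IH. Qed.

Lemma width_gated_blocks N v (x : B N) l o : width (gated_blocks v x l o) = sumn (map At l).
Proof. by elim: l o => //= b l IH o; rewrite width_cons IH. Qed.

Lemma state_blocks_cat v l1 l2 o :
  state_blocks v (l1 ++ l2) o = state_blocks v l1 o ++ state_blocks v l2 (o + sumn (map At l1)).
Proof. by elim: l1 o => [|b l IH] o /=; rewrite ?addn0 // IH addnA. Qed.

Lemma sumn_expand b : sumn (map At (expand b)) = At b.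
Proof. by case: b => //= *; rewrite ?addn0 ?addnA. Qed.

Lemma sumn_flatten_expand l : sumn (map At (flatten (map expand l))) = sumn (map At l).
Proof. by elim: l => //= b l IH; rewrite map_cat sumn_cat IH sumn_expand. Qed.

Lemma tens_expand N v b o (y : B N) :
  tens (state_blocks v (expand b) o) o y = gate_input v b o (restr N y o (At b)).
Proof.
case: b => [n| | |a|a|a|a c|a c d] /=; rewrite ?mulr1 //.
  by rewrite !restr_restr ?addn0 ?leq_addr.
by rewrite !restr_restr ?addn0 ?addnA // -addnA leq_addr.
Qed.

Lemma tens_flatten_expand N v l o (y : B N) :
  tens (state_blocks v (flatten (map expand l)) o) o y = tens (input_blocks v l o) o y.
Proof.
elim: l o => [|b l IH] o //=.
by rewrite state_blocks_cat tens_cat tens_expand width_state_blocks sumn_expand IH.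
Qed.

Lemma layer_tens_input N v (x y : B N) l o :
  layer idT N l o x y * tens (input_blocks v l o) o y = tens (gated_blocks v x l o) o y.
Proof. by elim: l o => [|b l IH] o /=; rewrite ?mulr1 // -IH; ring. Qed.

Lemma prod_sum_gated_blocks N v (x : B N) l o :
  \prod_(f <- gated_blocks v x l o) \sum_u tagged f u = tens (state_blocks v l o) o x.
Proof.
elim: l o => [|b l IH] o; first by rewrite big_nil.
by rewrite big_cons IH; congr (_ * _); apply: mulopv_local_gate.
Qed.

Lemma level_succ g i : (0 < i)%N -> level g i.+1 = flatten (map expand (level g i)).
Proof. by case: i. Qed.

Lemma sumn_level g i : sumn (map At (level g i)) = At g.
Proof. by rewrite /level; elim: i.-1 => [|k IH] /=; rewrite ?addn0 // sumn_flatten_expand. Qed.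

Definition level_state v g i : vec (At g) := tens (state_blocks v (level g i) 0) 0.
Arguments level_state v g i : clear implicits.

Lemma mulopv_levelgate v g i x : (0 < i)%N ->
  mulopv (levelgate idT g i) (level_state v g i.+1) x = level_state v g i x.
Proof.
move=> i_gt0; rewrite /mulopv /levelgate /level_state level_succ //.
under eq_bigr => y _ do rewrite tens_flatten_expand layer_tens_input.
by rewrite (@sum_tens (At g)) ?width_gated_blocks ?sumn_level // prod_sum_gated_blocks.
Qed.

Lemma sqnorm_basis n (e : B n) : sqnorm (basis e) = 1.
Proof.
rewrite /sqnorm -[RHS](sum_delta e (fun _ => 1)); apply: eq_bigr => u _.
by rewrite /basis conjC_nat -natrM mulnb andbb eq_sym mulr1.
Qed.

Lemma sqnorm_fstate v b o : sqnorm (fstate v b o) = 1.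
Proof.
elim: b o => [n| | |a IH|a IH|a IH|a IHa c IHc|a IHa c IHc d IHd] o; cbn [fstate];
  rewrite ?sqnorm_basis //.
- by rewrite NOTgE sqnorm_permop ?IH //; apply/flip_last_inv/At_gt0.
- by rewrite sqrtIgE sqnorm_lastop ?IH ?At_gt0 //; apply: sqrtI_coef_unitary.
- by rewrite sqrtNOTgE sqnorm_lastop ?IH ?At_gt0 //; apply: sqrtNOT_coef_unitary.
- rewrite XORgE sqnorm_permop; last exact/xor_last_inv/At_gt0/At_gt0.
  rewrite sqnorm_tens; last by rewrite /width /= addn0.
  by rewrite !big_cons big_nil /= IHa IHc !mul1r.
- rewrite TOFgE sqnorm_permop; last exact/toffoli_last_inv/At_gt0/At_gt0/At_gt0.
  rewrite sqnorm_tens; last by rewrite /width /= addn0 addnA.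
  by rewrite !big_cons big_nil /= IHa IHc IHd !mul1r.
Qed.

Lemma prod_sqnorm_state_blocks v l o : \prod_(f <- state_blocks v l o) sqnorm (tagged f) = 1.
Proof. by elim: l o => [|b l IH] o; rewrite ?big_nil // big_cons IH mulr1 sqnorm_fstate. Qed.

Lemma sqnorm_level_state v g i : sqnorm (level_state v g i) = 1.
Proof.
by rewrite sqnorm_tens ?prod_sqnorm_state_blocks // width_state_blocks sumn_level.
Qed.

(** * Uniform mixtures of pure states *)

Definition mixop (I : Type) n (vs : seq I) (p : I -> vec n) : op n :=
  fun x y => (size vs)%:R^-1 * \sum_(v <- vs) outer (p v) x y.

Lemma outer_quad n (p w : vec n) :
  \sum_x \sum_y (w x)^* * outer p x y * w y = (\sum_x (w x)^* * p x) * (\sum_x (w x)^* * p x)^*.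
Proof.
rewrite rmorph_sum big_distrl /=; apply: eq_bigr => x _.
rewrite big_distrr /=; apply: eq_bigr => y _.
by rewrite /outer rmorphM /= conjCK; ring.
Qed.

Lemma is_density_mixop (I : Type) n (vs : seq I) (p : I -> vec n) :
  (0 < size vs)%N -> (forall v, sqnorm (p v) = 1) -> is_density (mixop vs p).
Proof.
move=> vs_gt0 p_unit; have size_neq0 : (size vs)%:R != 0 :> C by rewrite pnatr_eq0 -lt0n.
split=> [w|].
  have -> : \sum_x \sum_y (w x)^* * mixop vs p x y * w y =
      (size vs)%:R^-1 * \sum_(v <- vs) \sum_x \sum_y (w x)^* * outer (p v) x y * w y.
    transitivity (\sum_x \sum_y \sum_(v <- vs)
        (size vs)%:R^-1 * ((w x)^* * outer (p v) x y * w y)).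
      apply: eq_bigr => x _; apply: eq_bigr => y _.
      by rewrite /mixop !big_distrr /= big_distrl /=; apply: eq_bigr => v _; ring.
    under eq_bigr => x _ do rewrite exchange_big /=.
    rewrite exchange_big /= big_distrr /=; apply: eq_bigr => v _.
    by rewrite big_distrr; apply: eq_bigr => x _; rewrite big_distrr.
  rewrite mulr_ge0 ?invr_ge0 ?ler0n //; apply: sumr_ge0 => v _.
  by rewrite outer_quad mul_conjC_ge0.
rewrite /trop /mixop -big_distrr /= exchange_big /=.
under eq_bigr => v _ do rewrite -[\sum_x _]/(sqnorm (p v)) p_unit.
by rewrite big_const_seq count_predT iter_addr_0 -mulr_natl mulr1 mulVf.
Qed.

Lemma chan_mixop (I : Type) n (vs : seq I) (p : I -> vec n) (G : op n) :
  opeq (chan G (mixop vs p)) (mixop vs (fun v => mulopv G (p v))).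
Proof.
move=> x y; rewrite /chan /mixop /mulop /adjop.
transitivity (\sum_z \sum_t \sum_(v <- vs)
    (size vs)%:R^-1 * (G x z * p v z * (G y t * p v t)^*)).
  apply: eq_bigr => z _; rewrite big_distrr /=; apply: eq_bigr => t _.
  rewrite big_distrr big_distrl big_distrr /=; apply: eq_bigr => v _.
  by rewrite /outer rmorphM /=; ring.
under eq_bigr => z _ do rewrite exchange_big /=.
rewrite exchange_big [RHS]big_distrr /=; apply: eq_bigr => v _.
rewrite /outer /mulopv rmorph_sum big_distrl big_distrr /=; apply: eq_bigr => z _.
by rewrite !big_distrr /=; apply: eq_bigr => t _; ring.
Qed.

Lemma red_mixop (I : Type) N (vs : seq I) (p : I -> vec N) off m x y :
  red N (mixop vs p) off m x y = (size vs)%:R^-1 * \sum_(v <- vs) red N (outer (p v)) off m x y.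
Proof.
rewrite /red /mixop -big_distrr /=; congr (_ * _).
by rewrite exchange_big.
Qed.

Lemma red_outer_state_blocks N v (l : seq form) j b x y :
  sumn (map At l) = N -> (j < size l)%N -> nth Fa l j = b ->
  red N (outer (tens (state_blocks v l 0) 0)) (offset l j) (At b) x y =
  outer (fstate v b (offset l j)) x y.
Proof.
move=> sizeN lt_j lj_b.
have l_split : l = take j l ++ b :: drop j.+1 l by rewrite -lj_b -drop_nth // cat_take_drop.
have offsetE : offset l j = width (state_blocks v (take j l) 0) by rewrite width_state_blocks.
rewrite {1}l_split state_blocks_cat /= add0n [in red _ _ _ _]offsetE.
rewrite red_outer_tens ?prod_sqnorm_state_blocks // !width_state_blocks -sizeN {3}l_split.
by rewrite map_cat sumn_cat /= addnA.
Qed.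

Definition mixture (vals : form -> seq (nat -> bool)) g i : op (At g) :=
  mixop (vals g) (fun v => level_state v g i).
Arguments mixture vals g i : clear implicits.

Lemma ctx_mixture vals g b i j : occurs g b i j ->
  opeq (ctx (mixture vals) g b i j) (mixop (vals g) (fun v => fstate v b (offset (level g i) j))).
Proof.
case=> _ lt_j lj_b x y; rewrite /ctx red_mixop; congr (_ * _).
by apply: eq_bigr => v _; rewrite red_outer_state_blocks ?sumn_level.
Qed.

Definition normal_valuations g (vs : seq (nat -> bool)) : Prop :=
  forall b i j i' j', occurs g b i j -> occurs g b i' j' ->
    opeq (mixop vs (fun v => fstate v b (offset (level g i) j)))
         (mixop vs (fun v => fstate v b (offset (level g i') j'))).

Lemma mixop_const (I : Type) n (vs : seq I) (p : vec n) :
  (0 < size vs)%N -> opeq (mixop vs (fun _ => p)) (outer p).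
Proof.
move=> vs_gt0 x y; rewrite /mixop big_const_seq count_predT iter_addr_0.
by rewrite -[outer p x y *+ _]mulr_natl mulrA mulVf ?mul1r // pnatr_eq0 -lt0n.
Qed.

Lemma eq_B1 (x y : B 1) : (x == y) = (bit x 0 == bit y 0).
Proof.
apply/eqP/eqP => [-> // | eq_xy]; apply: bitP => k.
by rewrite ltnS leqn0 => /eqP ->.
Qed.

Lemma outer_basis1 (e : B 1) x y : outer (basis e) x y = ((x == y) && (bit x 0 == bit e 0))%:R.
Proof.
rewrite /outer /basis conjC_nat -natrM mulnb !eq_B1.
by case: (bit x 0); case: (bit y 0); case: (bit e 0).
Qed.

Lemma holistic_mixture vals :
  (forall g, 0 < size (vals g))%N -> (forall g, normal_valuations g (vals g)) ->
  holistic idT (mixture vals).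
Proof.
move=> vals_gt0 vals_normal; split.
- by move=> g i _; apply: is_density_mixop => // v; apply: sqnorm_level_state.
- move=> g i /andP[i_gt0 _] x y; rewrite chan_mixop /mixture /mixop.
  by congr (_ * _); apply: eq_bigr => v _; rewrite /outer !mulopv_levelgate.
- move=> g b i j i' j' occ occ' x y.
  by rewrite !ctx_mixture //; apply: vals_normal.
- move=> g i j occ x y; rewrite ctx_mixture // mixop_const // P0_idT outer_basis1.
  by rewrite bit_zeroB eqbF_neg.
- move=> g i j occ x y; rewrite ctx_mixture // mixop_const // P1_idT outer_basis1.
  have bit_true : bit ([ffun => true] : B 1) 0 = true.
    by rewrite (bit_ffun (fun _ => true)) // => k; rewrite ffunE.
  by rewrite bit_true eqb_id.
Qed.

(** * Decidable normality *)

Fixpoint form_eqb (a b : form) : bool :=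
  match a, b with
  | Atom n, Atom m => n == m
  | Tr, Tr | Fa, Fa => true
  | Neg a, Neg b | Sqid a, Sqid b | Sqneg a, Sqneg b => form_eqb a b
  | Xor a c, Xor b d => form_eqb a b && form_eqb c d
  | Tof a c e, Tof b d f => [&& form_eqb a b, form_eqb c d & form_eqb e f]
  | _, _ => false
  end.

Lemma form_eqP : Equality.axiom form_eqb.
Proof.
move=> a b; apply: (iffP idP) => [|<-]; last first.
  by elim: a => [n| | |a IH|a IH|a IH|a IHa c IHc|a IHa c IHc d IHd] //=;
    rewrite ?eqxx ?IH ?IHa ?IHc ?IHd.
elim: a b => [n| | |a IH|a IH|a IH|a IHa c IHc|a IHa c IHc d IHd]
             [m| | |b|b|b|b e|b e f] //=.
- by move/eqP->.
- by move/IH->.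
- by move/IH->.
- by move/IH->.
- by case/andP=> /IHa-> /IHc->.
- by case/and3P=> /IHa-> /IHc-> /IHd->.
Qed.

HB.instance Definition _ := hasDecEq.Build form form_eqP.

Fixpoint subfb (a g : form) : bool :=
  (a == g) ||
  match g with
  | Atom _ | Tr | Fa => false
  | Neg b | Sqid b | Sqneg b => subfb a b
  | Xor b c => subfb a b || subfb a c
  | Tof b c d => [|| subfb a b, subfb a c | subfb a d]
  end.

Lemma subfb_subf a g : subfb a g -> subf a g.
Proof.
elim: g => [n| | |b IH|b IH|b IH|b IHb c IHc|b IHb c IHc d IHd] /= /orP[/eqP-> | sub] //;
  try by left.
- by right; apply: IH.
- by right; apply: IH.
- by right; apply: IH.
- by right; case/orP: sub => [/IHb | /IHc]; [left | right].
- right; case/or3P: sub => [/IHb | /IHc | /IHd] sub.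
  + by left.
  + by right; left.
  + by right; right.
Qed.

Definition occursb g b i j : bool :=
  [&& (1 <= i <= height g)%N, (j < size (level g i))%N & nth Fa (level g i) j == b].

Lemma occursbP g b i j : reflect (occurs g b i j) (occursb g b i j).
Proof. by apply: (iffP and3P) => [[? ? /eqP] | [? ? ->]]. Qed.

Definition occurrences g : seq (form * nat) :=
  flatten [seq [seq (nth Fa (level g i) j, offset (level g i) j) | j <- iota 0 (size (level g i))]
          | i <- iota 1 (height g)].

Lemma occurrences_occurs g b i j : occurs g b i j -> (b, offset (level g i) j) \in occurrences g.
Proof.
case=> /andP[i_gt0 le_ih] lt_j <-; apply/flatten_mapP; exists i.
  by rewrite mem_iota i_gt0 add1n ltnS.
by apply/mapP; exists j; rewrite ?mem_iota.
Qed.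

Lemma sum_seq_bool (I : Type) (vs : seq I) (h : pred I) (F : bool -> C) :
  \sum_(v <- vs) F (h v) = (count h vs)%:R * F true + (count (predC h) vs)%:R * F false.
Proof.
elim: vs => [|v vs IH]; first by rewrite big_nil !mul0r addr0.
by rewrite big_cons IH /=; case: (h v); rewrite /= !natrD; ring.
Qed.

Lemma mixop_atom_shift vs n o o' :
  count (fun v => v o) vs = count (fun v => v o') vs ->
  opeq (mixop vs (fun v => fstate v (Atom n) o)) (mixop vs (fun v => fstate v (Atom n) o')).
Proof.
move=> count_eq x y; rewrite /mixop; congr (_ * _).
have count_predC_eq : count (predC (fun v => v o)) vs = count (predC (fun v => v o')) vs.
  by apply/eqP; rewrite -(eqn_add2l (count (fun v => v o) vs)) {2}count_eq !count_predC.
pose F (b : bool) := outer (basis ([ffun => b] : B 1)) x y.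
rewrite (sum_seq_bool vs (fun v => v o) F) (sum_seq_bool vs (fun v => v o') F).
by rewrite count_eq count_predC_eq.
Qed.

Lemma fstate_const v b o o' u : (forall k k', v k = v k') -> fstate v b o u = fstate v b o' u.
Proof.
move=> v_const; elim: b o o' u => [n| | |a IH|a IH|a IH|a IHa c IHc|a IHa c IHc d IHd] o o' u //=.
- by rewrite (v_const o o').
- by apply: eq_bigr => y _; rewrite (IH o o').
- by apply: eq_bigr => y _; rewrite (IH o o').
- by apply: eq_bigr => y _; rewrite (IH o o').
- by apply: eq_bigr => y _; rewrite (IHa o o') (IHc _ (o' + At a)).
- apply: eq_bigr => y _.
  by rewrite (IHa o o') (IHc _ (o' + At a)) (IHd _ (o' + At a + At c)).
Qed.

Lemma normal_valuations_const g (c : bool) : normal_valuations g [:: fun _ => c].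
Proof.
move=> b i j i' j' _ _ x y; rewrite /mixop !big_seq1 /outer.
by rewrite !(@fstate_const (fun _ => c) b (offset (level g i) j) (offset (level g i') j')).
Qed.

Definition atomic_shift (vs : seq (nat -> bool)) (b : form) (o o' : nat) : bool :=
  match b with
  | Atom _ => count (fun v => v o) vs == count (fun v => v o') vs
  | Tr | Fa => true
  | _ => false
  end.

Definition compatible vs (p q : form * nat) : bool :=
  [|| p.1 != q.1, p.2 == q.2 | atomic_shift vs p.1 p.2 q.2].

(* A sufficient condition: a subformula repeated at different qubits must be
   a constant or an atom that [vs] makes true equally often at both places. *)
Definition normalb g vs : bool :=
  all (fun p => all (compatible vs p) (occurrences g)) (occurrences g).

Lemma normalb_normal g vs : normalb g vs -> normal_valuations g vs.
Proof.
move=> /allP g_normal b i j i' j' occ occ'.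
have /allP/(_ _ (occurrences_occurs occ')) := g_normal _ (occurrences_occurs occ).
rewrite /compatible /= eqxx /= => /orP[/eqP-> // |].
by case: b {occ occ'} => //= n /eqP; apply: mixop_atom_shift.
Qed.

(** * Classical formulas *)

Fixpoint classical (b : form) : bool :=
  match b with
  | Atom _ | Tr | Fa => true
  | Sqid _ | Sqneg _ => false
  | Neg a => classical a
  | Xor a c => classical a && classical c
  | Tof a c d => [&& classical a, classical c & classical d]
  end.

Fixpoint last_value (v : nat -> bool) (b : form) (o : nat) : bool :=
  match b with
  | Atom _ => v o
  | Tr => true
  | Fa | Sqid _ | Sqneg _ => false
  | Neg a => ~~ last_value v a o
  | Xor a c => last_value v a o (+) last_value v c (o + At a)
  | Tof a c d =>
      (last_value v a o && last_value v c (o + At a)) (+) last_value v d (o + At a + At c)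
  end.

Definition catB m n (e1 : B m) (e2 : B n) : B (m + n) :=
  [ffun i : 'I_(m + n) => if (i < m)%N then bit e1 i else bit e2 (i - m)].

Lemma bit_catB m n (e1 : B m) (e2 : B n) k :
  bit (catB e1 e2) k = if (k < m)%N then bit e1 k else bit e2 (k - m).
Proof.
rewrite (bit_ffun (fun k => if (k < m)%N then bit e1 k else bit e2 (k - m))); last first.
  by move=> i; rewrite ffunE.
case: (ltnP k (m + n)) => //= le_k; case: ifP => _; rewrite bit_out //; lia.
Qed.

Lemma restr_catB m n (e1 : B m) (e2 : B n) (y : B (m + n)) :
  (restr (m + n) y 0 m == e1) && (restr (m + n) y m n == e2) = (y == catB e1 e2).
Proof.
apply/andP/eqP => [[/eqP <- /eqP <-] | ->].
  apply: bitP => k lt_k; rewrite bit_catB !bit_restr; case: ltnP => //= le_mk.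
  by rewrite subnKC // -(ltn_add2l m) subnKC // lt_k.
split; apply/eqP/bitP => k lt_k; rewrite bit_restr lt_k bit_catB /=.
  by rewrite add0n lt_k.
by rewrite ltnNge leq_addr /= addKn.
Qed.

Lemma mulopv_permop_basis n (f : B n -> B n) (e : B n) x :
  involutive f -> mulopv (permop f) (basis e) x = basis (f e) x.
Proof. by move=> f_inv; rewrite mulopv_permop // /basis (canF_eq f_inv). Qed.

Lemma tens_basis2 m n (e1 : B m) (e2 : B n) y :
  tens [:: Block (basis e1); Block (basis e2)] 0 y = basis (catB e1 e2) y.
Proof. by rewrite /= mulr1 /basis -natrM mulnb restr_catB. Qed.

Lemma tens_basis3 m n p (e1 : B m) (e2 : B n) (e3 : B p) y :
  tens [:: Block (basis e1); Block (basis e2); Block (basis e3)] 0 y =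
  basis (catB (catB e1 e2) e3) y.
Proof.
rewrite /= mulr1 /basis -!natrM !mulnb; congr (_ %:R).
by rewrite -restr_catB -restr_catB !restr_restr ?addn0 ?leq_addr // andbA !add0n.
Qed.

Lemma bit_flip_last n (e : B n) : (0 < n)%N -> bit (flip_last e) n.-1 = ~~ bit e n.-1.
Proof. by move=> n_gt0; rewrite bit_setbit_eq // ltn_predL. Qed.

Lemma bit_xor_last m n (e1 : B m) (e2 : B n) : (0 < m)%N -> (0 < n)%N ->
  bit (xor_last (catB e1 e2)) (m + n).-1 = bit e1 m.-1 (+) bit e2 n.-1.
Proof.
move=> m_gt0 n_gt0; rewrite bit_setbit_eq; last lia.
rewrite !bit_catB ifT; last lia.
by rewrite ifF; [congr (_ (+) bit _ _) | ]; lia.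
Qed.

Lemma bit_toffoli_last m n p (e1 : B m) (e2 : B n) (e3 : B p) :
  (0 < m)%N -> (0 < n)%N -> (0 < p)%N ->
  bit (toffoli_last (catB (catB e1 e2) e3)) (m + n + p).-1 =
  (bit e1 m.-1 && bit e2 n.-1) (+) bit e3 p.-1.
Proof.
move=> m_gt0 n_gt0 p_gt0; rewrite bit_setbit_eq; last lia.
rewrite !bit_catB.
have -> : ((m + n).-1 < m + n)%N by lia.
have -> : (m.-1 < m + n)%N by lia.
have -> : (m.-1 < m)%N by lia.
have -> : ((m + n).-1 < m)%N = false by lia.
have -> : ((m + n + p).-1 < m + n)%N = false by lia.
have -> : ((m + n).-1 - m = n.-1)%N by lia.
by have -> : ((m + n + p).-1 - (m + n) = p.-1)%N by lia.
Qed.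

Lemma fstate_classical v b o : classical b ->
  exists2 e : B (At b), fstate v b o =1 basis e & bit e (At b).-1 = last_value v b o.
Proof.
elim: b o => [n| | |a IH|a IH|a IH|a IHa c IHc|a IHa c IHc d IHd] o /= b_cl //.
- exists [ffun => v o]; first by [].
  by rewrite (bit_ffun (fun _ => v o)) // => i; rewrite ffunE.
- exists [ffun => true]; first by [].
  by rewrite (bit_ffun (fun _ => true)) // => i; rewrite ffunE.
- by exists (zeroB 1); rewrite ?bit_zeroB.
- have [e eE e_last] := IH o b_cl; have a_gt0 := At_gt0 a.
  exists (flip_last e); last by rewrite bit_flip_last // e_last.
  move=> u; rewrite NOTgE -mulopv_permop_basis; last exact: flip_last_inv.
  by apply: eq_bigr => y _; rewrite eE.
- case/andP: b_cl => a_cl c_cl.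
  have [ea eaE ea_last] := IHa o a_cl; have [ec ecE ec_last] := IHc (o + At a) c_cl.
  exists (xor_last (catB ea ec)); last by rewrite bit_xor_last ?At_gt0 // ea_last ec_last.
  move=> u; rewrite XORgE -mulopv_permop_basis; last exact/xor_last_inv/At_gt0/At_gt0.
  by apply: eq_bigr => y _; rewrite -tens_basis2 /= eaE ecE.
- case/and3P: b_cl => a_cl c_cl d_cl.
  have [ea eaE ea_last] := IHa o a_cl; have [ec ecE ec_last] := IHc (o + At a) c_cl.
  have [ed edE ed_last] := IHd (o + At a + At c) d_cl.
  exists (toffoli_last (catB (catB ea ec) ed)).
    move=> u; rewrite TOFgE -mulopv_permop_basis; last exact/toffoli_last_inv/At_gt0/At_gt0/At_gt0.
    by apply: eq_bigr => y _; rewrite -tens_basis3 /= eaE ecE edE.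
  by rewrite bit_toffoli_last ?At_gt0 // ea_last ec_last ed_last.
Qed.

(** * Refutations *)

Lemma prob_opeq T n (rho rho' : op n) : opeq rho rho' -> prob T rho = prob T rho'.
Proof.
move=> eq_rho; rewrite /prob /trop /mulop.
by apply: eq_bigr => x _; apply: eq_bigr => z _; rewrite eq_rho.
Qed.

Lemma sum_outer_basis_last n (e : B n) :
  \sum_(x | bit x n.-1) outer (basis e) x x = (bit e n.-1)%:R.
Proof.
rewrite big_mkcond -(sum_delta e (fun x => (bit x n.-1)%:R)) /=.
apply: eq_bigr => x _; rewrite /outer /basis conjC_nat (eq_sym e).
by case: (x == e); case: (bit x n.-1); rewrite ?mul1r ?mul0r ?mulr0.
Qed.

Lemma prob_mixop_classical vs b o : classical b ->
  prob idT (mixop vs (fun v => fstate v b o)) =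
  (size vs)%:R^-1 * (count (fun v => last_value v b o) vs)%:R.
Proof.
move=> b_cl; rewrite prob_idT /mixop -big_distrr /= exchange_big /=; congr (_ * _).
transitivity (\sum_(v <- vs) ((last_value v b o)%:R : C)).
  apply: eq_bigr => v _; have [e eE <-] := fstate_classical v o b_cl.
  by rewrite -sum_outer_basis_last; apply: eq_bigr => x _; rewrite /outer !eE.
by rewrite (sum_seq_bool vs (fun v => last_value v b o) (fun c => c%:R)) mulr1 mulr0 addr0.
Qed.

Lemma prob_ctx_mixture vals g b i j : occurs g b i j -> classical b ->
  prob idT (ctx (mixture vals) g b i j) =
  (size (vals g))%:R^-1 * (count (fun v => last_value v b (offset (level g i) j)) (vals g))%:R.
Proof. by move=> occ b_cl; rewrite (prob_opeq _ (ctx_mixture vals occ)) prob_mixop_classical. Qed.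

(* Under the identity perspective the probability of a classical occurrence is
   the proportion of the valuations of [vs] that make it true. *)
Definition refutes g (vs : seq (nat -> bool)) a b i j i' j' : bool :=
  [&& (0 < size vs)%N, normalb g vs, subfb a g, subfb b g,
      occursb g a i j, occursb g b i' j', classical a, classical b &
      (count (fun v => last_value v b (offset (level g i') j')) vs <
       count (fun v => last_value v a (offset (level g i) j)) vs)%N].

Lemma refutes_not_entails g vs a b i j i' j' : refutes g vs a b i j i' j' -> ~ entails a b.
Proof.
case/and5P => vs_gt0 /normalb_normal g_normal /subfb_subf a_sub /subfb_subf b_sub.
case/and5P => /occursbP a_occ /occursbP b_occ a_cl b_cl lt_count.
pose vals g' := if g' == g then vs else [:: fun _ => false].
have vals_gt0 g' : (0 < size (vals g'))%N by rewrite /vals; case: eqP.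
have vals_normal g' : normal_valuations g' (vals g').
  by rewrite /vals; case: eqP => [-> // | _]; apply: normal_valuations_const.
have Hol_holistic := holistic_mixture vals_gt0 vals_normal.
move/(_ idT unitary_idT g a_sub b_sub _ Hol_holistic _ _ _ _ a_occ b_occ).
rewrite !prob_ctx_mixture // /vals eqxx ler_pM2l ?invr_gt0 ?ltr0n // ler_nat.
by rewrite leqNgt lt_count.
Qed.

Lemma entails_refl a : entails a a.
Proof.
move=> T _ g _ _ Hol [_ _ Hol_normal _ _] i j i' j' occ occ'.
by rewrite (prob_opeq _ (Hol_normal _ _ _ _ _ _ occ occ')).
Qed.

Definition ones (s : seq nat) : nat -> bool := fun k => k \in s.

Definition α := Atom 0.
Definition β := Atom 1.
Definition δ := Atom 2.

Lemma not_entails_and_self : ~ entails α (And α α).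
Proof.
apply: (@refutes_not_entails (And α α) [:: ones [:: 0]; ones [:: 1]] _ _ 2 0 1 0).
by vm_compute.
Qed.

Lemma not_entails_and_comm : ~ entails (And α β) (And β α).
Proof.
apply: (@refutes_not_entails (Xor (And α β) (And β α))
          [:: ones [:: 0; 1; 3]; ones [:: 4]] _ _ 2 0 2 1).
by vm_compute.
Qed.

Lemma not_entails_and_assoc : ~ entails (And α (And β δ)) (And (And α β) δ).
Proof.
apply: (@refutes_not_entails (Xor (And α (And β δ)) (And (And α β) δ))
          [:: ones [:: 0; 1; 2; 5; 6]; ones [:: 8]] _ _ 2 0 2 1).
by vm_compute.
Qed.

Lemma not_entails_and_assoc_inv : ~ entails (And (And α β) δ) (And α (And β δ)).
Proof.
apply: (@refutes_not_entails (Xor (And (And α β) δ) (And α (And β δ)))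
          [:: ones [:: 0; 1; 3; 5; 6]; ones [:: 7]] _ _ 2 0 2 1).
by vm_compute.
Qed.

Lemma not_entails_and_or_distr :
  ~ entails (And α (Or β δ)) (Or (And α β) (And α δ)).
Proof.
apply: (@refutes_not_entails (Xor (And α (Or β δ)) (Or (And α β) (And α δ)))
          [:: ones [:: 0; 1; 5; 9]; ones [:: 2; 6; 8]] _ _ 2 0 2 1).
by vm_compute.
Qed.

Lemma not_entails_and_or_factor :
  ~ entails (Or (And α β) (And α δ)) (And α (Or β δ)).
Proof.
apply: (@refutes_not_entails (Xor (Or (And α β) (And α δ)) (And α (Or β δ)))
          [:: ones [:: 0; 1; 7]; ones [:: 3; 4; 8; 9]] _ _ 2 0 2 1).
by vm_compute.
Qed.

Lemma not_entails_and_neg : ~ entails (And α (Neg α)) Fa.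
Proof.
apply: (@refutes_not_entails (And α (Neg α)) [:: ones [:: 0]; ones [:: 1]] _ _ 1 0 2 2).
by vm_compute.
Qed.

Lemma not_entails_xor_comm : ~ entails (Xor α β) (Xor β α).
Proof.
apply: (@refutes_not_entails (Xor (Xor α β) (Xor β α))
          [:: ones [:: 0]; ones [:: 1; 2; 3]] _ _ 2 0 2 1).
by vm_compute.
Qed.

Lemma not_entails_xor_or : ~ entails (Xor α β) (Or α β).
Proof.
apply: (@refutes_not_entails (Xor (Xor α β) (Or α β))
          [:: ones [:: 0]; ones [:: 1; 2; 3]] _ _ 2 0 2 1).
by vm_compute.
Qed.

Lemma not_entails_xor_or_neg : ~ entails (Xor α β) (Or (Neg α) (Neg β)).
Proof.
apply: (@refutes_not_entails (Xor (Xor α β) (Or (Neg α) (Neg β)))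
          [:: ones [:: 0; 2; 3]; ones [:: 1]] _ _ 2 0 2 1).
by vm_compute.
Qed.

Theorem theorem5p2 :
  (exists a, ~ entails a (And a a)) /\
  (exists a b, ~ entails (And a b) (And b a)) /\
  (exists a b d, ~ entails (And a (And b d)) (And (And a b) d)) /\
  (exists a b d, ~ entails (And (And a b) d) (And a (And b d))) /\
  (exists a b d, ~ entails (And a (Or b d)) (Or (And a b) (And a d))) /\
  (exists a b d, ~ entails (Or (And a b) (And a d)) (And a (Or b d))) /\
  (exists a b d, entails d a /\ entails d b /\ ~ entails d (And a b)) /\
  (exists a b, ~ entails (And a (Neg a)) b) /\
  (exists a b, ~ entails (Xor a b) (Xor b a)) /\
  (exists a b, ~ entails (Xor a b) (Or a b) /\ ~ entails (Xor a b) (Or (Neg a) (Neg b))).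
Proof.
split; first by exists α; apply: not_entails_and_self.
split; first by exists α, β; apply: not_entails_and_comm.
split; first by exists α, β, δ; apply: not_entails_and_assoc.
split; first by exists α, β, δ; apply: not_entails_and_assoc_inv.
split; first by exists α, β, δ; apply: not_entails_and_or_distr.
split; first by exists α, β, δ; apply: not_entails_and_or_factor.
split.
  by exists α, α, α; split; [|split]; [apply: entails_refl.. | apply: not_entails_and_self].
split; first by exists α, Fa; apply: not_entails_and_neg.
split; first by exists α, β; apply: not_entails_xor_comm.
by exists α, β; split; [apply: not_entails_xor_or | apply: not_entails_xor_or_neg].
Qed.
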